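(* Let $k\ge1$, $m\ge1$, $h\ge0$ be fixed integers. For the random key graph $G(n,X_n,Y_n)$ with $X_n\ge2$ for all large $n$ and edge probability $q_n=\frac{\ln n+(k-1)\ln\ln n+\alpha_n}{n}$ with $\alpha_n=o(\ln n)$, let $N_i$ ($1\le i\le m$) be the set of nodes in $\{v_{m+1},\dots,v_n\}$ adjacent to $v_i$. Let $P_a$ be the probability of the event that (a) $S_i\cap S_j=\emptyset$ for all $1\le i<j\le m$, (b) $N_i\cap N_j=\emptyset$ for all $1\le i<j\le m$, and (c) $|N_i|=h$ for all $1\le i\le m$. Then $$P_a\sim (h!)^{-m}(nq_n)^{hm}e^{-mnq_n}\quad(n\to\infty).$$
   Context: The random key graph $G(n,X_n,Y_n)$ (with $1\le X_n\le Y_n$ integers depending on $n$) has node set $\{v_1,\dots,v_n\}$; each node $v_i$ is independently assigned a set $S_i$ of $X_n$ distinct objects chosen uniformly at random among all $X_n$-element subsets of a pool of $Y_n$ objects; an undirected edge joins $v_i$ and $v_j$ ($i\ne j$) iff $S_i\cap S_j\neq\emptyset$. The edge probability is $q_n=1-\binom{Y_n-X_n}{X_n}/\binom{Y_n}{X_n}$. $x_n\sim y_n$ means $x_n/y_n\to1$. *)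

From HB Require Import structures.
From mathcomp Require Import all_boot.
From Stdlib Require Import Reals.

Set Implicit Arguments.
Unset Strict Implicit.
Unset Printing Implicit Defensive.

(* Nodes v_1..v_n are indexed by 'I_n (v_{i+1} <-> i); the key pool is 'I_Y.
   A key assignment is S : {ffun 'I_n -> {set 'I_Y}}; it is admissible when
   every S_i has exactly X elements. The sample space of G(n,X,Y) is the
   (uniformly distributed) set of admissible assignments. *)
Definition keyring_ok (n X Y : nat) (S : {ffun 'I_n -> {set 'I_Y}}) : bool :=
  [forall i, #|S i| == X].

Definition adj (n Y : nat) (S : {ffun 'I_n -> {set 'I_Y}}) (i j : 'I_n) : bool :=
  (i != j) && (S i :&: S j != set0).

Definition nbhd (n Y m : nat) (S : {ffun 'I_n -> {set 'I_Y}}) (i : 'I_n) : {set 'I_n} :=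
  [set j : 'I_n | (m <= j) && adj S i j].

Definition event_a (n Y m h : nat) (S : {ffun 'I_n -> {set 'I_Y}}) : bool :=
  [forall i : 'I_n, forall j : 'I_n, ((i < j) && (j < m)) ==>
      ((S i :&: S j == set0) && (nbhd m S i :&: nbhd m S j == set0))]
  && [forall i : 'I_n, (i < m) ==> (#|nbhd m S i| == h)].

Definition count_a (n X Y m h : nat) : nat :=
  #|[set S : {ffun 'I_n -> {set 'I_Y}} | keyring_ok X S && event_a m h S]|.

Definition count_total (n X Y : nat) : nat :=
  #|[set S : {ffun 'I_n -> {set 'I_Y}} | keyring_ok X S]|.

Local Open Scope R_scope.

Definition prob_a (n X Y m h : nat) : R :=
  INR (count_a n X Y m h) / INR (count_total n X Y).

Definition q_edge (X Y : nat) : R :=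
  1 - INR (binomial.binomial (subn Y X) X) / INR (binomial.binomial Y X).

From Stdlib Require Import Reals Factorial Lra Lia Psatz.
From mathcomp Require all_boot zify.

(* P_a is computed exactly.  Condition on the rings S_1, ..., S_m, which must be
   pairwise disjoint, and on the neighbourhoods N_1, ..., N_m, which must be
   pairwise disjoint h-subsets of the n - m late nodes.  Every late node then
   chooses its ring independently: outside all N_i it must avoid the m rings, in
   N_i it must avoid the other m - 1 rings but meet S_i.  With u_k the probability
   that a random ring avoids k given disjoint rings, this gives
     P_a = P(S_i disjoint) * #(choices of the N_i) * (u_(m-1) - u_m)^(mh) * u_m^(n-m-mh).
   As 1 - k q <= u_k <= (1 - q)^k and u_(m-1) - u_m <= q, each factor is asymptotic
   to its counterpart in (h!)^-m (n q)^(hm) e^(-m n q), because q_n -> 0 and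
   n q_n^2 -> 0, the latter since n q_n = O(ln n). *)

(* The ssreflect notations on nat stay inside this module, so that the main
   theorem is read with the standard ones. *)
Module KeyGraphCount.
Import all_boot zify.
Set Implicit Arguments.
Unset Strict Implicit.
Unset Printing Implicit Defensive.

Lemma card_family_prod (aT rT : finType) (F : aT -> pred rT) :
  #|[set f : {ffun aT -> rT} | [forall x, f x \in F x]]| = \prod_(x : aT) #|F x|.
Proof.
rewrite (_ : \prod_(x : aT) #|F x| = foldr muln 1 [seq #|F x| | x : aT]); last first.
  by rewrite /image_mem foldrE big_map big_enum.
rewrite -(card_family (fun x => F x)); apply: eq_card => f.
by rewrite inE; apply/forallP/familyP.
Qed.

Lemma card_bigcup_uniform (T : finType) m (g : 'I_m -> {set T}) x :
  (forall i, #|g i| = x) -> (forall i j, i != j -> [disjoint g i & g j]) ->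
  #|\bigcup_(i < m) g i| = m * x.
Proof.
elim: m g => [|m IH] g gx gd; first by rewrite big_ord0 cards0.
have gdl i j : i != j -> [disjoint g (widen_ord (leqnSn m) i) & g (widen_ord (leqnSn m) j)].
  by move=> ij; apply: gd; apply: contra ij => /eqP/(congr1 val) /= e; apply/eqP/val_inj.
rewrite big_ord_recr /= cardsU IH // gx disjoint_setI0; first by rewrite cards0 subn0 mulSn addnC.
rewrite disjoint_sym; apply: bigcup_disjoint => i _; rewrite disjoint_sym.
by apply: gd; apply/eqP => /(congr1 val) /= e; move: (ltn_ord i); rewrite e ltnn.
Qed.

Lemma card_draws_disjoint (T : finType) (W : {set T}) x :
  #|[set A : {set T} | [disjoint A & W] && (#|A| == x)]| = 'C(#|T| - #|W|, x).
Proof.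
rewrite -(cardsC W) addKn -cards_draws; apply: eq_card => A.
by rewrite !inE disjoints_subset.
Qed.

Section DisjointDraws.
Variables (T : finType) (x : nat) (U : {set T}).

Definition disjoint_draws m (f : {ffun 'I_m -> {set T}}) : bool :=
  [forall i, (f i \subset U) && (#|f i| == x)] &&
  [forall i, forall j, (i != j) ==> [disjoint f i & f j]].

Definition ffun_behead m (f : {ffun 'I_m.+1 -> {set T}}) : {ffun 'I_m -> {set T}} :=
  [ffun i => f (lift ord0 i)].

Lemma disjoint_draws_behead m (f : {ffun 'I_m.+1 -> {set T}}) :
  disjoint_draws f -> disjoint_draws (ffun_behead f).
Proof.
case/andP => /forallP f1 /forallP f2; apply/andP; split; apply/forallP => i.
  by rewrite ffunE; apply: f1.
apply/forallP => j; rewrite !ffunE; apply/implyP => ij.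
have /forallP/(_ (lift ord0 j))/implyP := f2 (lift ord0 i); apply.
by rewrite (inj_eq (@lift_inj _ _)).
Qed.

Definition extend_draw m (g : {ffun 'I_m -> {set T}}) (j : 'I_m.+1) : pred {set T} :=
  if unlift ord0 j is Some i then pred1 (g i)
  else mem [set A : {set T} | A \subset U :\: \bigcup_(i < m) g i & #|A| == x].

Lemma disjoint_draws_beheadE m (g : {ffun 'I_m -> {set T}}) : disjoint_draws g ->
  [set f | disjoint_draws f & ffun_behead f == g] =
  [set f : {ffun 'I_m.+1 -> {set T}} | [forall j, f j \in extend_draw g j]].
Proof.
case/andP=> /forallP g_sub /forallP g_dis; apply/setP => f; rewrite !inE; apply/idP/idP.
  case/andP => /andP [/forallP f1 /forallP f2] /eqP fg; apply/forallP => j.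
  rewrite /extend_draw; case: (unliftP ord0 j) => [i ->|->]; first by rewrite -fg ffunE inE.
  rewrite inE; have /andP[f1a ->] := f1 ord0; rewrite andbT.
  rewrite setDE subsetI f1a /= -disjoints_subset; apply: bigcup_disjoint => i _.
  rewrite -fg ffunE; have /forallP/(_ (lift ord0 i))/implyP := f2 ord0; apply.
  by apply/eqP => /(congr1 val).
move=> /forallP fF.
have fl i : f (lift ord0 i) = g i by have := fF (lift ord0 i); rewrite /extend_draw liftK => /eqP.
have f0 : (f ord0 \subset U :\: \bigcup_(i < m) g i) && (#|f ord0| == x).
  by have := fF ord0; rewrite /extend_draw unlift_none inE.
have K0 i : [disjoint f ord0 & g i].
  case/andP: f0; rewrite subsetD => /andP[_ d] _; apply: disjointWr d.
  exact: (bigcup_sup i).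
have -> : ffun_behead f == g by apply/eqP/ffunP => i; rewrite ffunE fl.
rewrite andbT; apply/andP; split; apply/forallP => i.
  case: (unliftP ord0 i) => [i' ->|->]; first by rewrite fl g_sub.
  by case/andP: f0 => /subset_trans-> //; apply: subsetDl.
apply/forallP => j; apply/implyP.
case: (unliftP ord0 i) => [i' ->|->]; case: (unliftP ord0 j) => [j' ->|->].
- by rewrite (inj_eq (@lift_inj _ _)) !fl => ij; have /forallP/(_ j')/implyP := g_dis i'; apply.
- by rewrite fl disjoint_sym.
- by rewrite fl.
- by rewrite eqxx.
Qed.

Lemma card_disjoint_draws_behead m (g : {ffun 'I_m -> {set T}}) :
  disjoint_draws g ->
  #|[set f | disjoint_draws f & ffun_behead f == g]| = 'C(#|U| - m * x, x).
Proof.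
move=> gv; rewrite disjoint_draws_beheadE // card_family_prod big_ord_recl /= big1 => [|i _].
  case/andP: gv => /forallP g_sub /forallP g_dis.
  rewrite muln1 /extend_draw unlift_none cards_draws cardsD.
  rewrite (setIidPr _); last by apply/bigcupsP => i _; case/andP: (g_sub i).
  rewrite (@card_bigcup_uniform _ _ _ x) // => [i|i j ij]; first by case/andP: (g_sub i) => _ /eqP.
  by have /forallP/(_ j)/implyP := g_dis i; apply.
by rewrite /extend_draw liftK card1.
Qed.

Lemma card_disjoint_draws m :
  #|[set f : {ffun 'I_m -> {set T}} | disjoint_draws f]| = \prod_(i < m) 'C(#|U| - i * x, x).
Proof.
elim: m => [|m IH].
  rewrite big_ord0; apply: (@eq_card1 _ [ffun i => set0]) => f.
  rewrite !inE; apply/idP/eqP => [_|->]; first by apply/ffunP => -[].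
  by apply/andP; split; apply/forallP => -[].
rewrite -sum1_card (partition_big (@ffun_behead m) (@disjoint_draws m)); last first.
  by move=> f; rewrite inE; apply: disjoint_draws_behead.
rewrite big_ord_recr /= -IH -sum1_card big_distrl /=.
rewrite [RHS](eq_bigl (@disjoint_draws m)) => [|g]; last by rewrite inE.
apply: eq_bigr => g gv; rewrite mul1n -(card_disjoint_draws_behead gv) -sum1_card.
by apply: eq_bigl => f; rewrite !inE.
Qed.

End DisjointDraws.

Section RingsMeeting.
Variables (T : finType) (x m : nat) (p : 'I_m -> {set T}).
Hypotheses (card_p : forall i, #|p i| = x)
           (p_disjoint : forall i j, i != j -> [disjoint p i & p j]).

Lemma card_draws_avoiding_all :
  #|[set A : {set T} | [forall i, [disjoint A & p i]] && (#|A| == x)]| =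
  'C(#|T| - m * x, x).
Proof.
rewrite -(card_bigcup_uniform card_p p_disjoint) -card_draws_disjoint.
apply: eq_card => A; rewrite !inE; congr (_ && _).
by apply/forallP/bigcup_disjointP => d i; [move=> _|]; apply: d.
Qed.

Lemma card_draws_meeting_only i0 :
  #|[set A : {set T} | [forall i, ~~ [disjoint A & p i] == (i == i0)] && (#|A| == x)]| =
  'C(#|T| - m.-1 * x, x) - 'C(#|T| - m * x, x).
Proof.
pose P' := \bigcup_(i | i != i0) p i.
have card_P' : #|P'| = m.-1 * x.
  have := card_bigcup_uniform card_p p_disjoint.
  rewrite (bigD1 i0) //= cardsU card_p disjoint_setI0; last first.
    by apply/bigcup_disjointP => i; rewrite eq_sym; apply: p_disjoint.
  rewrite cards0 subn0 -[in m * x](prednK (leq_ltn_trans (leq0n _) (ltn_ord i0))).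
  by rewrite mulSn => /addnI.
have P'E (A : {set T}) : [disjoint A & P'] = [forall i, (i != i0) ==> [disjoint A & p i]].
  by apply/bigcup_disjointP/forallP => d i; [apply/implyP; apply: d | apply: (implyP (d i))].
rewrite -card_P' -card_draws_avoiding_all -card_draws_disjoint.
set S := [set A : {set T} | [forall i, [disjoint A & p i]] && _].
set S' := [set A : {set T} | [disjoint A & P'] && _].
have sub : S \subset S'.
  apply/subsetP => A; rewrite !inE P'E => /andP[/forallP d ->]; rewrite andbT.
  by apply/forallP => i; apply/implyP.
rewrite -(setIidPr sub) -cardsD; apply: eq_card => A; rewrite !inE P'E.
case: (#|A| == x); rewrite ?andbT ?andbF //.
apply/forallP/andP => [H|[/forallPn [i1 ni1] H] i].
  split; last first.
    by apply/forallP => i; apply/implyP => ne; have := H i; rewrite (negbTE ne) => /eqP/negbFE.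
  by apply/forallPn; exists i0; have := H i0; rewrite eqxx => /eqP ->.
case: (eqVneq i i0) => [->|ne]; last by rewrite (implyP (forallP H i) ne).
case: (eqVneq i1 i0) => [<-|ne1]; first by rewrite ni1.
by move: ni1; rewrite (implyP (forallP H i1) ne1).
Qed.

End RingsMeeting.

(* The number of X-subsets of a Y-set avoiding k given pairwise disjoint X-subsets. *)
Definition avoid_count (X Y k : nat) := 'C(Y - k * X, X).

Definition count_disjoint_nbhds n m h := \prod_(i < m) 'C(n - m - i * h, h).

Section KeyRingEvent.
Variables (n X Y m h : nat) (le_mn : m <= n).

Let first_node (i : 'I_m) : 'I_n := widen_ord le_mn i.

Definition first_rings (S : {ffun 'I_n -> {set 'I_Y}}) := [ffun i => S (first_node i)].
Definition first_nbhds (S : {ffun 'I_n -> {set 'I_Y}}) := [ffun i => nbhd m S (first_node i)].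
Definition late_nodes := [set j : 'I_n | m <= j].

Lemma first_node_lt i : first_node i < m. Proof. exact: (ltn_ord i). Qed.

Lemma first_node_neq i (j : 'I_n) : m <= j -> first_node i != j.
Proof. by move=> mj; apply: contraL (first_node_lt i) => /eqP ->; rewrite -leqNgt. Qed.

Lemma first_nodeP (j : 'I_n) : j < m -> {i : 'I_m | first_node i = j}.
Proof. by move=> jm; exists (Ordinal jm); apply: val_inj. Qed.

Lemma event_a_disjoint_draws S : keyring_ok X S && event_a m h S ->
  disjoint_draws X [set: 'I_Y] (first_rings S) && disjoint_draws h late_nodes (first_nbhds S).
Proof.
case/andP => okS /andP [/forallP ea /forallP eb].
have ea' (i j : 'I_m) : i != j ->
    (S (first_node i) :&: S (first_node j) == set0) &&
    (nbhd m S (first_node i) :&: nbhd m S (first_node j) == set0).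
  move=> ij; case: (ltngtP i j) => c.
  - have /forallP/(_ (first_node j))/implyP := ea (first_node i).
    by apply; rewrite /first_node /= c ltn_ord.
  - have /forallP/(_ (first_node i))/implyP := ea (first_node j).
    by rewrite /first_node /= c ltn_ord setIC [nbhd _ _ _ :&: _]setIC => ->.
  - by move: ij; rewrite (val_inj c) eqxx.
apply/andP; split; apply/andP; split; apply/forallP => i.
- by rewrite ffunE subsetT; apply: (forallP okS).
- by apply/forallP => j; apply/implyP => /ea'/andP[]; rewrite !ffunE setI_eq0.
- rewrite ffunE; apply/andP; split; first by apply/subsetP => j; rewrite !inE => /andP[].
  by have /implyP := eb (first_node i); apply; rewrite first_node_lt.
- by apply/forallP => j; apply/implyP => /ea'/andP[_]; rewrite !ffunE setI_eq0.
Qed.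

(* The rings node j may take once [first_rings S = p] and [first_nbhds S = B]. *)
Definition fiber_ring (p : {ffun 'I_m -> {set 'I_Y}}) (B : {ffun 'I_m -> {set 'I_n}}) (j : 'I_n) :
  pred {set 'I_Y} :=
  [pred A | if j < m then [forall i : 'I_m, (val i == val j) ==> (A == p i)]
            else (#|A| == X) && [forall i : 'I_m, (A :&: p i != set0) == (j \in B i)]].

Lemma event_a_in_fiber (S : {ffun 'I_n -> {set 'I_Y}}) : keyring_ok X S ->
  [forall j, S j \in fiber_ring (first_rings S) (first_nbhds S) j].
Proof.
move=> /forallP okS; apply/forallP => j; rewrite inE /=; case: ifP => jm.
  apply/forallP => i; apply/implyP => /eqP ij.
  by rewrite ffunE (_ : first_node i = j) //; apply: val_inj.
have mj : m <= j by rewrite leqNgt jm.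
rewrite okS /=; apply/forallP => i.
by rewrite !ffunE inE /adj mj first_node_neq // setIC.
Qed.

Lemma fiber_event_a p B (S : {ffun 'I_n -> {set 'I_Y}}) :
  disjoint_draws X [set: 'I_Y] p -> disjoint_draws h late_nodes B ->
  [forall j, S j \in fiber_ring p B j] ->
  [&& keyring_ok X S, event_a m h S & (first_rings S, first_nbhds S) == (p, B)].
Proof.
move=> /andP[/forallP p_sub /forallP p_dis] /andP[/forallP B_sub /forallP B_dis] /forallP FS.
have S_first i : S (first_node i) = p i.
  have := FS (first_node i); rewrite inE /= first_node_lt.
  by move=> /forallP/(_ i)/implyP/(_ (eqxx _))/eqP.
have S_late (j : 'I_n) : m <= j ->
    (#|S j| == X) && [forall i : 'I_m, (S j :&: p i != set0) == (j \in B i)].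
  by move=> mj; have := FS j; rewrite inE /= ltnNge mj.
have nbhd_first i : nbhd m S (first_node i) = B i.
  apply/setP => j; rewrite inE /adj; case: (leqP m j) => mj /=.
    have /andP[_ /forallP/(_ i)/eqP <-] := S_late j mj.
    by rewrite first_node_neq // S_first setIC.
  apply/esym/negP => jB; have /andP[/subsetP sB _] := B_sub i.
  by have := sB _ jB; rewrite inE leqNgt mj.
have -> : first_rings S = p by apply/ffunP => i; rewrite ffunE S_first.
have -> : first_nbhds S = B by apply/ffunP => i; rewrite ffunE nbhd_first.
rewrite eqxx andbT; apply/andP; split.
  apply/forallP => j; case: (ltnP j m) => jm; last by case/andP: (S_late j jm).
  by have [i <-] := first_nodeP jm; rewrite S_first; case/andP: (p_sub i).
apply/andP; split; apply/forallP => i.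
  apply/forallP => j; apply/implyP => /andP [ij jm].
  have [j' ej] := first_nodeP jm; have [i' ei] := first_nodeP (ltn_trans ij jm).
  have ne : i' != j' by apply/eqP => e; move: ij; rewrite -ei -ej e ltnn.
  rewrite -ei -ej !S_first !nbhd_first !setI_eq0.
  have /forallP/(_ j')/implyP/(_ ne) -> := p_dis i'.
  by have /forallP/(_ j')/implyP/(_ ne) -> := B_dis i'.
by apply/implyP => im; have [i' <-] := first_nodeP im; rewrite nbhd_first; case/andP: (B_sub i').
Qed.

Lemma event_a_fiberE p B (S : {ffun 'I_n -> {set 'I_Y}}) :
  disjoint_draws X [set: 'I_Y] p -> disjoint_draws h late_nodes B ->
  [&& keyring_ok X S, event_a m h S & (first_rings S, first_nbhds S) == (p, B)] =
  [forall j, S j \in fiber_ring p B j].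
Proof.
move=> pv Bv; apply/idP/idP; last exact: fiber_event_a.
by case/and3P => okS _ /eqP [<- <-]; apply: event_a_in_fiber.
Qed.

Lemma card_fiber_ring p B (j : 'I_n) :
  disjoint_draws X [set: 'I_Y] p -> disjoint_draws h late_nodes B ->
  #|fiber_ring p B j| =
    if j < m then 1
    else if j \in \bigcup_(i < m) B i then avoid_count X Y m.-1 - avoid_count X Y m
    else avoid_count X Y m.
Proof.
rewrite /avoid_count; case/andP=> /forallP p_sub /forallP p_dis /andP[_ /forallP B_dis].
have card_p i : #|p i| = X by case/andP: (p_sub i) => _ /eqP.
have p_disj i i' : i != i' -> [disjoint p i & p i'].
  by move=> ne; have /forallP/(_ i')/implyP := p_dis i; apply.
case: ifP => jm.
  have [i ei] := first_nodeP jm; rewrite -[1](card1 (p i)); apply: eq_card => A.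
  rewrite !inE jm; apply/forallP/eqP => [/(_ i)/implyP/(_ _)/eqP -> //|->]; first by rewrite -ei.
  move=> i'; apply/implyP => /eqP e; rewrite (_ : i' = i) //; apply: val_inj.
  by rewrite e -ei.
case: ifP => jB.
  have [i0 _ ji0] := bigcupP jB.
  have jBi i : (j \in B i) = (i == i0).
    case: eqP => [->//|/eqP ne]; apply/negP => ji.
    have /forallP/(_ i0)/implyP/(_ ne) := B_dis i.
    by move/disjointFr/(_ ji); rewrite ji0.
  have := card_draws_meeting_only card_p p_disj i0; rewrite card_ord => <-.
  apply: eq_card => A; rewrite !inE jm andbC; congr (_ && _).
  by apply: eq_forallb => i; rewrite jBi setI_eq0.
have := card_draws_avoiding_all card_p p_disj; rewrite card_ord => <-.
apply: eq_card => A; rewrite !inE jm andbC; congr (_ && _); apply: eq_forallb => i.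
have -> : (j \in B i) = false by apply: contraFF jB => ji; apply/bigcupP; exists i.
by rewrite setI_eq0 eqbF_neg negbK.
Qed.

Lemma card_late_nodes : #|late_nodes| = n - m.
Proof.
have card_early : #|[set j : 'I_n | j < m]| = m.
  rewrite -sum1_card (eq_bigl (fun j : 'I_n => j < m)) => [|j]; last by rewrite inE.
  by rewrite -(big_ord_widen _ (fun _ => 1) le_mn) sum1_card card_ord.
rewrite -card_early -[n in n - _]card_ord -(cardsC [set j : 'I_n | j < m]) addKn.
by apply: eq_card => j; rewrite !inE leqNgt.
Qed.

Lemma prod_fiber_counts (UB : {set 'I_n}) a b :
  UB \subset late_nodes -> #|UB| = m * h ->
  \prod_(j : 'I_n) (if j < m then 1 else if j \in UB then a else b) =
  a ^ (m * h) * b ^ (n - m - m * h).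
Proof.
move=> sUB cUB.
rewrite (bigID (fun j : 'I_n => j < m)) /= big1 ?mul1n => [|j ->] //.
rewrite (eq_bigr (fun j : 'I_n => if j \in UB then a else b)) => [|j /negbTE ->] //.
rewrite (bigID (fun j => j \in UB)) /=.
rewrite (eq_bigr (fun _ => a)) => [|j /andP[_ ->]] //.
rewrite [X in _ * X](eq_bigr (fun _ => b)) => [|j /andP[_ /negbTE ->]] //.
rewrite (eq_bigl (fun j => j \in UB)) => [|j]; last first.
  by case jU: (j \in UB); rewrite ?andbF ?andbT // -leqNgt; have := subsetP sUB _ jU; rewrite inE.
rewrite [X in _ * X](eq_bigl (fun j => j \in late_nodes :\: UB)) => [|j]; last first.
  by rewrite !inE -leqNgt andbC.
by rewrite !prod_nat_const cUB cardsD (setIidPr sUB) card_late_nodes cUB.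
Qed.

Lemma count_a_eq : count_a n X Y m h =
  \prod_(i < m) avoid_count X Y i * count_disjoint_nbhds n m h *
  ((avoid_count X Y m.-1 - avoid_count X Y m) ^ (m * h) * avoid_count X Y m ^ (n - m - m * h)).
Proof.
rewrite /count_a -sum1_card.
rewrite (eq_bigl (fun S => keyring_ok X S && event_a m h S)) => [|S]; last by rewrite inE.
rewrite (partition_big (fun S => (first_rings S, first_nbhds S))
   (fun pB => disjoint_draws X [set: 'I_Y] pB.1 && disjoint_draws h late_nodes pB.2)); last first.
  exact: event_a_disjoint_draws.
rewrite (eq_bigr (fun _ => (avoid_count X Y m.-1 - avoid_count X Y m) ^ (m * h) *
                           avoid_count X Y m ^ (n - m - m * h))); last first.
  move=> [p B] /= /andP [pv Bv]; rewrite sum1_card.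
  transitivity #|[set S : {ffun 'I_n -> {set 'I_Y}} | [forall j, S j \in fiber_ring p B j]]|.
    by apply: eq_card => S; rewrite inE -(event_a_fiberE S pv Bv) andbA.
  have [/forallP B_sub /forallP B_dis] := andP Bv.
  rewrite card_family_prod (eq_bigr _ (fun j _ => card_fiber_ring j pv Bv)) prod_fiber_counts //.
    by apply/bigcupsP => i _; case/andP: (B_sub i).
  apply: card_bigcup_uniform => [i|i j ij]; first by case/andP: (B_sub i) => _ /eqP.
  by have /forallP/(_ j)/implyP := B_dis i; apply.
rewrite sum_nat_const; congr (_ * _).
have rings := @card_disjoint_draws _ X [set: 'I_Y] m; rewrite cardsT card_ord in rings.
have nbhds := @card_disjoint_draws _ h late_nodes m; rewrite card_late_nodes in nbhds.
by rewrite /count_disjoint_nbhds -rings -nbhds -cardsX; apply: eq_card => -[p B]; rewrite !inE.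
Qed.

End KeyRingEvent.

Lemma count_total_eq n X Y : count_total n X Y = 'C(Y, X) ^ n.
Proof.
rewrite /count_total -[n in _ ^ n]card_ord -[Y in 'C(Y, _)]card_ord -card_draws.
rewrite -prod_nat_const -card_family_prod; apply: eq_card => S.
by rewrite !inE; apply: eq_forallb => j; rewrite inE.
Qed.

Lemma bin_diff_monoS X Z : 0 < X ->
  'C(Z, X) + 'C(Z.+1 - X, X) <= 'C(Z.+1, X) + 'C(Z - X, X).
Proof.
case: X => [//|x] _; rewrite binS.
case: (leqP x.+1 Z) => hz; last by rewrite (_ : Z.+1 - x.+1 = 0) ?bin0n //=; lia.
by rewrite subSn // binS; have := leq_bin2l x (leq_subr x.+1 Z); lia.
Qed.

(* Z |-> 'C(Z, X) - 'C(Z - X, X), the number of X-subsets of a Z-set meeting a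
   given X-subset, is nondecreasing. *)
Lemma bin_diff_mono X Z Y : 0 < X -> Z <= Y ->
  'C(Z, X) + 'C(Y - X, X) <= 'C(Y, X) + 'C(Z - X, X).
Proof.
move=> X0; elim: Y => [|Y IH]; first by rewrite leqn0 => /eqP ->.
rewrite leq_eqVlt => /orP [/eqP ->|]; first by rewrite addnC.
by rewrite ltnS => /IH; have := bin_diff_monoS Y X0; lia.
Qed.

Lemma bin_ratio_monoS X Z : 0 < X ->
  'C(Z - X, X) * 'C(Z.+1, X) <= 'C(Z, X) * 'C(Z.+1 - X, X).
Proof.
move=> X0; case: (leqP X (Z - X)) => hz; last by rewrite bin_small.
set a := Z - X; have Za : Z = a + X by rewrite /a subnK //; lia.
have Zs : Z.+1 - X = a.+1 by lia.
have e1 := mul_bin_down Z.+1 X; have e2 := mul_bin_down a.+1 X; rewrite /= in e1 e2.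
rewrite Zs.
set P := 'C(a, X) in e2 *; set Q := 'C(a.+1, X) in e2 *.
set R := 'C(Z, X) in e1 *; set S := 'C(Z.+1, X) in e1 *.
set u := Z.+1 - X in e1 *; set t := a.+1 - X in e2 *.
have ut0 : 0 < u * t by rewrite muln_gt0; apply/andP; split; lia.
rewrite -(leq_pmul2r ut0).
have -> : P * S * (u * t) = P * t * (u * S) by rewrite -!multE; ring.
have -> : R * Q * (u * t) = R * u * (t * Q) by rewrite -!multE; ring.
rewrite -e1 -e2.
have -> : P * t * (Z.+1 * R) = P * R * (t * Z.+1) by rewrite -!multE; ring.
have -> : R * u * (a.+1 * P) = P * R * (u * a.+1) by rewrite -!multE; ring.
by apply: leq_mul => //; rewrite /t /u Zs Za -addSn -subn_sqr leq_subr.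
Qed.

(* Z |-> 'C(Z - X, X) / 'C(Z, X), the probability that a random X-subset of a
   Z-set avoids a given X-subset, is nondecreasing. *)
Lemma bin_ratio_mono X Z Y : 0 < X -> Z <= Y ->
  'C(Z - X, X) * 'C(Y, X) <= 'C(Z, X) * 'C(Y - X, X).
Proof.
move=> X0; elim: Y => [|Y IH]; first by rewrite leqn0 => /eqP ->; rewrite mulnC.
rewrite leq_eqVlt => /orP [/eqP ->|]; first by rewrite mulnC.
rewrite ltnS => ZY; have h1 := IH ZY; have h2 := bin_ratio_monoS Y X0.
case: (posnP 'C(Y, X)) => CY0.
  have ZX : Z < X by apply: leq_ltn_trans ZY _; rewrite ltnNge -bin_gt0 CY0.
  have ZX0 : Z - X = 0 by apply/eqP; rewrite subn_eq0 ltnW.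
  by rewrite ZX0 bin0n eqn0Ngt X0.
rewrite -(leq_pmul2l CY0); apply: (@leq_trans ('C(Z, X) * 'C(Y - X, X) * 'C(Y.+1, X))).
  by rewrite mulnCA mulnA leq_mul2r h1 orbT.
by rewrite mulnCA -mulnA leq_mul2l h2 orbT.
Qed.

Lemma avoid_count_ratio X Y k : 0 < X ->
  avoid_count X Y k.+1 * avoid_count X Y 0 <= avoid_count X Y k * avoid_count X Y 1.
Proof.
move=> X0; rewrite /avoid_count mul0n subn0 mul1n.
by have := bin_ratio_mono X0 (leq_subr (k * X) Y); rewrite -subnDA mulSn addnC.
Qed.

Lemma avoid_count_diff X Y k : 0 < X ->
  avoid_count X Y k + avoid_count X Y 1 <= avoid_count X Y 0 + avoid_count X Y k.+1.
Proof.
move=> X0; rewrite /avoid_count mul0n subn0 mul1n.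
by have := bin_diff_mono X0 (leq_subr (k * X) Y); rewrite -subnDA mulSn [X + _]addnC.
Qed.

Lemma avoid_count_mono X Y k l : k <= l -> avoid_count X Y l <= avoid_count X Y k.
Proof. by move=> kl; apply/leq_bin2l/leq_sub2l; rewrite leq_mul2r kl orbT. Qed.

Lemma ffact_bounds N K M k : K <= N - k -> N <= M -> K ^ k <= N ^_ k <= M ^ k.
Proof.
move=> KN NM; have pow_prod a : a ^ k = \prod_(i < k) a by rewrite prod_nat_const card_ord.
rewrite ffact_prod !pow_prod; apply/andP; split; apply: leq_prod => i _.
  by apply: leq_trans KN _; apply/leq_sub2l/ltnW.
exact: leq_trans (leq_subr _ _) NM.
Qed.

Lemma prod_bin_bounds n m h :
  (n - (m + m * h + h)) ^ (h * m) <= count_disjoint_nbhds n m h * h`! ^ m <= n ^ (h * m).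
Proof.
have factor_bounds (i : 'I_m) : (n - (m + m * h + h)) ^ h <= 'C(n - m - i * h, h) * h`! <= n ^ h.
  rewrite bin_ffact; apply: ffact_bounds; last by rewrite -subnDA leq_subr.
  rewrite -!subnDA -addnA leq_sub2l // leq_add2l leq_add2r.
  by rewrite leq_mul2r (ltnW (ltn_ord i)) orbT.
have pow_prod a : a ^ m = \prod_(i < m) a by rewrite prod_nat_const card_ord.
rewrite /count_disjoint_nbhds !expnM !pow_prod -big_split /=.
by apply/andP; split; apply: leq_prod => i _; case/andP: (factor_bounds i).
Qed.

Local Open Scope R_scope.

Lemma INR_expn a b : INR (a ^ b) = INR a ^ b.
Proof. by elim: b => [|b IH] //; rewrite expnS mult_INR IH. Qed.

Lemma INR_leq a b : (a <= b)%N -> INR a <= INR b.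
Proof. by move/leP; apply: le_INR. Qed.

Lemma factorial_fact h : h`! = fact h.
Proof. by elim: h => [|h IH] //; rewrite factS IH. Qed.

Definition avoid_prob X Y k : R := INR (avoid_count X Y k) / INR (avoid_count X Y 0).

Definition prob_disjoint_rings X Y m : R :=
  INR (\prod_(i < m) avoid_count X Y i) / INR (avoid_count X Y 0) ^ m.

Lemma avoid_count0_gt0 X Y : (X <= Y)%coq_nat -> 0 < INR (avoid_count X Y 0).
Proof. by move/leP => XY; apply/lt_0_INR/ltP; rewrite /avoid_count mul0n subn0 bin_gt0. Qed.

Lemma q_edge_avoid_prob X Y : q_edge X Y = 1 - avoid_prob X Y 1.
Proof. by rewrite /q_edge /avoid_prob /avoid_count mul0n subn0 mul1n. Qed.

Section AvoidProb.
Variables (X Y : nat) (X_gt0 : (0 < X)%coq_nat) (le_XY : (X <= Y)%coq_nat).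

Let C := INR (avoid_count X Y 0).
Let C_gt0 : 0 < C := avoid_count0_gt0 le_XY.

Lemma avoid_probE k : INR (avoid_count X Y k) = avoid_prob X Y k * C.
Proof. by rewrite /avoid_prob /Rdiv Rmult_assoc Rinv_l ?Rmult_1_r //; apply: Rgt_not_eq. Qed.

Lemma avoid_prob0 : avoid_prob X Y 0 = 1.
Proof. by rewrite /avoid_prob Rdiv_diag //; apply: Rgt_not_eq. Qed.

Lemma avoid_prob_ge0 k : 0 <= avoid_prob X Y k.
Proof. by apply: (Rmult_le_reg_r C) => //; rewrite Rmult_0_l -avoid_probE; apply: pos_INR. Qed.

Lemma avoid_prob_le k l : (k <= l)%coq_nat -> avoid_prob X Y l <= avoid_prob X Y k.
Proof.
move/leP=> kl; apply: (Rmult_le_reg_r _ _ _ C_gt0); rewrite -!avoid_probE.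
exact/INR_leq/avoid_count_mono.
Qed.

Lemma avoid_prob_diff k :
  avoid_prob X Y k + avoid_prob X Y 1 <= 1 + avoid_prob X Y k.+1.
Proof.
apply: (Rmult_le_reg_r _ _ _ C_gt0); rewrite !Rmult_plus_distr_r Rmult_1_l -!avoid_probE -!plus_INR.
exact/INR_leq/avoid_count_diff/ltP.
Qed.

Lemma avoid_prob_ratio k : avoid_prob X Y k.+1 <= avoid_prob X Y k * avoid_prob X Y 1.
Proof.
have := INR_leq (avoid_count_ratio Y k (introT ltP X_gt0)).
rewrite !mult_INR !avoid_probE avoid_prob0 => key.
apply: (Rmult_le_reg_r (C * C)); first exact: Rmult_lt_0_compat.
nra.
Qed.

Lemma prob_disjoint_rings_bounds m :
  avoid_prob X Y m ^ m <= prob_disjoint_rings X Y m <= 1.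
Proof.
have pow_prod a : (a ^ m = \prod_(i < m) a)%N by rewrite prod_nat_const card_ord.
have lo : INR (avoid_count X Y m) ^ m <= INR (\prod_(i < m) avoid_count X Y i).
  rewrite -INR_expn; apply/INR_leq; rewrite pow_prod.
  by apply: leq_prod => i _; apply/avoid_count_mono/ltnW.
have up : INR (\prod_(i < m) avoid_count X Y i) <= C ^ m.
  rewrite -INR_expn; apply/INR_leq; rewrite pow_prod.
  by apply: leq_prod => i _; apply: avoid_count_mono.
have Cm_gt0 : 0 < C ^ m by apply: pow_lt.
rewrite avoid_probE Rpow_mult_distr in lo.
have divK a : a / C ^ m * C ^ m = a.
  by rewrite /Rdiv Rmult_assoc Rinv_l ?Rmult_1_r //; apply: Rgt_not_eq.
rewrite /prob_disjoint_rings; split; apply: (Rmult_le_reg_r _ _ _ Cm_gt0); rewrite divK //.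
by rewrite Rmult_1_l.
Qed.

(* The arithmetic on nat is spelled out with the Peano operations so that the
   statement matches the terms built outside this module. *)
Lemma prob_a_eq n m h : (Nat.add m (Nat.mul m h) <= n)%coq_nat ->
  prob_a n X Y m h =
  prob_disjoint_rings X Y m * INR (count_disjoint_nbhds n m h) *
  (avoid_prob X Y m.-1 - avoid_prob X Y m) ^ Nat.mul m h *
  avoid_prob X Y m ^ Nat.sub (Nat.sub n m) (Nat.mul m h).
Proof.
rewrite plusE minusE multE => /leP le_n.
have le_mn : (m <= n)%N by apply: leq_trans le_n; apply: leq_addr.
have CE : 'C(Y, X) = avoid_count X Y 0 by rewrite /avoid_count mul0n subn0.
have CnE : C ^ n = C ^ m * C ^ (m * h) * C ^ (n - m - m * h).
  by rewrite -!pow_add !plusE -subnDA subnKC.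
rewrite /prob_a (count_a_eq X Y h le_mn) count_total_eq CE !mult_INR !INR_expn -/C CnE.
rewrite minus_INR; last exact/leP/avoid_count_mono/leq_pred.
rewrite !avoid_probE -Rmult_minus_distr_r !(Rpow_mult_distr _ C).
rewrite /prob_disjoint_rings -/C.
have Ck_neq0 k : C ^ k <> 0 by apply/pow_nonzero/Rgt_not_eq.
move: (Ck_neq0 m) (Ck_neq0 (m * h)%N) (Ck_neq0 (n - m - m * h)%N).
set a := C ^ m; set b := C ^ (m * h); set c := C ^ (n - m - m * h) => a0 b0 c0.
by field.
Qed.

End AvoidProb.

Lemma count_disjoint_nbhds_bounds n m h :
  INR (Nat.sub n (Nat.add (Nat.add m (Nat.mul m h)) h)) ^ Nat.mul h m <=
  INR (count_disjoint_nbhds n m h) * INR (fact h) ^ m <= INR n ^ Nat.mul h m.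
Proof.
rewrite plusE minusE multE.
have /andP[lo up] := prod_bin_bounds n m h.
by rewrite -factorial_fact -!INR_expn -mult_INR; split; apply: INR_leq.
Qed.

End KeyGraphCount.

Import KeyGraphCount.
Open Scope R_scope.

Section AvoidProbBounds.
Variables (X Y : nat) (X_gt0 : (0 < X)%nat) (le_XY : (X <= Y)%nat).

Lemma avoid_prob_le1 k : avoid_prob X Y k <= 1.
Proof. rewrite <- (avoid_prob0 le_XY); apply avoid_prob_le; [exact le_XY | apply Nat.le_0_l]. Qed.

Lemma q_edge_bounds : 0 <= q_edge X Y <= 1.
Proof.
rewrite q_edge_avoid_prob.
pose proof (avoid_prob_ge0 le_XY 1); pose proof (avoid_prob_le1 1); lra.
Qed.

Lemma avoid_prob_lower k : 1 - INR k * q_edge X Y <= avoid_prob X Y k.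
Proof.
rewrite q_edge_avoid_prob; induction k as [|k IH].
- rewrite (avoid_prob0 le_XY); simpl; lra.
- rewrite S_INR; pose proof (avoid_prob_diff X_gt0 le_XY k); lra.
Qed.

Lemma avoid_prob_upper k : avoid_prob X Y k <= (1 - q_edge X Y) ^ k.
Proof.
rewrite q_edge_avoid_prob; replace (1 - (1 - avoid_prob X Y 1)) with (avoid_prob X Y 1) by ring.
induction k as [|k IH].
- rewrite (avoid_prob0 le_XY); simpl; lra.
- apply Rle_trans with (avoid_prob X Y k * avoid_prob X Y 1); [apply avoid_prob_ratio; assumption|].
  simpl; rewrite Rmult_comm; apply Rmult_le_compat_l; [|exact IH].
  apply avoid_prob_ge0; exact le_XY.
Qed.

Lemma avoid_prob_pred_sub m : (1 <= m)%nat ->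
  avoid_prob X Y (pred m) - avoid_prob X Y m <= q_edge X Y.
Proof.
intros Hm; rewrite q_edge_avoid_prob; destruct m as [|m]; [lia|]; simpl pred.
pose proof (avoid_prob_diff X_gt0 le_XY m); lra.
Qed.

End AvoidProbBounds.

Lemma pow_one_minus_le x j : 0 <= x <= 1 -> (1 - x) ^ j <= 1 - INR j * x + INR j ^ 2 * x ^ 2.
Proof.
intros Hx; induction j as [|j IH]; [simpl; lra|].
rewrite S_INR; pose proof (pos_INR j).
apply Rle_trans with ((1 - x) * (1 - INR j * x + INR j ^ 2 * x ^ 2)).
- simpl; apply Rmult_le_compat_l; lra.
- simpl; nra.
Qed.

Lemma bernoulli_ineq x n : -1 <= x -> 1 + INR n * x <= (1 + x) ^ n.
Proof.
intros Hx; induction n as [|n IH]; [simpl; lra|].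
rewrite S_INR; pose proof (pos_INR n).
apply Rle_trans with ((1 + x) * (1 + INR n * x)).
- assert (0 <= INR n * x * x) by (rewrite Rmult_assoc; apply Rmult_le_pos; nra); nra.
- simpl; apply Rmult_le_compat_l; lra.
Qed.

Lemma exp_pow x n : exp x ^ n = exp (INR n * x).
Proof.
induction n as [|n IH]; [simpl; rewrite Rmult_0_l, exp_0; reflexivity|].
simpl pow; rewrite IH, S_INR, <- exp_plus; f_equal; ring.
Qed.

Lemma ln_le_compat x y : 0 < x -> x <= y -> ln x <= ln y.
Proof. intros Hx [Hxy | <-]; [apply Rlt_le, ln_increasing | apply Rle_refl]; assumption. Qed.

Lemma ln_INR_ge1 n : (3 <= n)%nat -> 1 <= ln (INR n).
Proof.
intros Hn; rewrite <- (ln_exp 1); apply ln_le_compat; [apply exp_pos|].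
pose proof exp_le_3; apply Rle_trans with 3; [lra|].
replace 3 with (INR 3) by (simpl; lra); apply le_INR; exact Hn.
Qed.

Lemma ln_le_sub1 y : 0 < y -> ln y <= y - 1.
Proof. intros Hy; pose proof (exp_ineq1_le (ln y)) as H; rewrite exp_ln in H; lra. Qed.

Lemma ln_le_root4 x : 0 < x -> ln x <= 4 * sqrt (sqrt x).
Proof.
intros Hx; set (y := sqrt (sqrt x)).
assert (Hy : 0 < y) by (apply sqrt_lt_R0, sqrt_lt_R0, Hx).
assert (Hx4 : x = y ^ 4).
{ assert (Hyy : y * y = sqrt x) by (apply sqrt_sqrt, Rlt_le, sqrt_lt_R0, Hx).
  replace (y ^ 4) with ((y * y) * (y * y)) by ring; rewrite Hyy, sqrt_sqrt; lra. }
rewrite Hx4, ln_pow by exact Hy; pose proof (ln_le_sub1 y Hy); simpl INR; lra.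
Qed.

(* u^j >= u^n >= (1 - x)^n, and (1 - x) e^x >= 1 - x^2 *)
Lemma pow_exp_lower u x j n : 0 <= x < 1 -> 1 - x <= u <= 1 -> (j <= n)%nat ->
  1 - INR n * x ^ 2 <= u ^ j * exp (INR n * x).
Proof.
intros Hx Hu Hjn.
assert (Hun : u ^ n <= u ^ j).
{ replace n with (j + (n - j))%nat at 1 by lia; rewrite pow_add.
  replace (u ^ j) with (u ^ j * 1) at 2 by ring.
  apply Rmult_le_compat_l; [apply pow_le; lra | rewrite <- (pow1 (n - j)); apply pow_incr; lra]. }
assert (Hu1 : (1 - x) ^ n <= u ^ n) by (apply pow_incr; lra).
assert (Hex : 1 + - x ^ 2 <= (1 - x) * exp x).
{ pose proof (exp_ineq1_le x); pose proof (exp_pos x); simpl; nra. }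
assert (Hb : 1 + INR n * - x ^ 2 <= (1 + - x ^ 2) ^ n) by (apply bernoulli_ineq; simpl; nra).
assert (Hb2 : (1 + - x ^ 2) ^ n <= ((1 - x) * exp x) ^ n) by (apply pow_incr; simpl; split; nra).
rewrite <- exp_pow; apply Rle_trans with ((1 - x) ^ n * exp x ^ n).
- rewrite <- Rpow_mult_distr; lra.
- apply Rmult_le_compat_r; [apply pow_le, Rlt_le, exp_pos | lra].
Qed.

Lemma pow_exp_upper u x j n : 0 <= u <= exp (- x) -> (j <= n)%nat ->
  u ^ j * exp (INR n * x) <= exp (INR (n - j) * x).
Proof.
intros Hu Hjn.
apply Rle_trans with (exp (INR j * - x) * exp (INR n * x)).
- apply Rmult_le_compat_r; [apply Rlt_le, exp_pos|].
  rewrite <- exp_pow; apply pow_incr; exact Hu.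
- rewrite <- exp_plus, minus_INR by exact Hjn; right; f_equal; ring.
Qed.

Lemma Un_cv_eventually_ext (a b : nat -> R) l :
  Un_cv a l -> (exists N, forall n, (N <= n)%nat -> a n = b n) -> Un_cv b l.
Proof.
intros Ha [N HN] eps Heps; destruct (Ha eps Heps) as [N1 H1].
exists (Nat.max N N1); intros n Hn; rewrite <- HN by lia; apply H1; lia.
Qed.

Lemma Un_cv_squeeze (a lo up : nat -> R) l : Un_cv lo l -> Un_cv up l ->
  (exists N, forall n, (N <= n)%nat -> lo n <= a n <= up n) -> Un_cv a l.
Proof.
intros Hlo Hup [N HN] eps Heps.
destruct (Hlo eps Heps) as [N1 H1]; destruct (Hup eps Heps) as [N2 H2].
exists (Nat.max N (Nat.max N1 N2)); intros n Hn.
specialize (HN n ltac:(lia)); specialize (H1 n ltac:(lia)); specialize (H2 n ltac:(lia)).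
unfold Rdist in *; apply Rabs_def2 in H1, H2; apply Rabs_def1; lra.
Qed.

Lemma Un_cv_const c : Un_cv (fun _ => c) c.
Proof. intros eps Heps; exists O; intros; unfold Rdist; rewrite Rminus_diag, Rabs_R0; lra. Qed.

Lemma Un_cv_pow_1 (a : nat -> R) j : Un_cv a 1 -> Un_cv (fun n => a n ^ j) 1.
Proof.
intros Ha; rewrite <- (pow1 j); induction j as [|j IH]; simpl; [apply Un_cv_const|].
apply CV_mult; assumption.
Qed.

Lemma Un_cv_scal_0 (a : nat -> R) c : Un_cv a 0 -> Un_cv (fun n => c * a n) 0.
Proof.
intros Ha; replace 0 with (c * 0) by ring; apply CV_mult; [apply Un_cv_const | exact Ha].
Qed.

Lemma Un_cv_one_minus (a : nat -> R) c : Un_cv a 0 -> Un_cv (fun n => 1 - c * a n) 1.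
Proof.
intros Ha; assert (H : Un_cv (fun n => 1 - c * a n) (1 - 0)).
{ apply CV_minus; [apply Un_cv_const | apply Un_cv_scal_0, Ha]. }
rewrite Rminus_0_r in H; exact H.
Qed.

Lemma Un_cv_exp_0 (a : nat -> R) : Un_cv a 0 -> Un_cv (fun n => exp (a n)) 1.
Proof.
intros Ha; rewrite <- exp_0; apply (continuity_seq exp a 0); [|exact Ha].
apply derivable_continuous_pt, derivable_pt_exp.
Qed.

Lemma Un_cv_eventually_lt (a : nat -> R) c : Un_cv a 0 -> 0 < c ->
  exists N, forall n, (N <= n)%nat -> a n < c.
Proof.
intros Ha Hc; destruct (Ha c Hc) as [N HN]; exists N; intros n Hn.
specialize (HN n Hn); unfold Rdist in HN; rewrite Rminus_0_r in HN.
apply Rabs_def2 in HN; lra.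
Qed.

Lemma Un_cv_inv_INR : Un_cv (fun n => / INR n) 0.
Proof.
intros eps Heps; destruct (archimed_cor1 eps Heps) as [N [HN HN0]].
exists N; intros n Hn; unfold Rdist; rewrite Rminus_0_r.
assert (0 < INR N) by (apply lt_0_INR; lia).
assert (INR N <= INR n) by (apply le_INR; lia).
rewrite Rabs_right by (apply Rle_ge, Rlt_le, Rinv_0_lt_compat; lra).
apply Rle_lt_trans with (/ INR N); [apply Rinv_le_contravar; lra | exact HN].
Qed.

Lemma Un_cv_ln_sqr_div : Un_cv (fun n => ln (INR n) ^ 2 / INR n) 0.
Proof.
apply Un_cv_squeeze with (lo := fun _ => 0) (up := fun n => sqrt (256 * / INR n)).
- apply Un_cv_const.
- rewrite <- sqrt_0; apply (continuity_seq sqrt); [apply continuity_pt_sqrt; lra|].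
  apply Un_cv_scal_0, Un_cv_inv_INR.
- exists 1%nat; intros n Hn.
  assert (Hn1 : 1 <= INR n) by (apply (le_INR 1); lia).
  assert (Hl0 : 0 <= ln (INR n)) by (rewrite <- ln_1; apply ln_le_compat; lra).
  assert (Hl : ln (INR n) <= 4 * sqrt (sqrt (INR n))) by (apply ln_le_root4; lra).
  assert (Hs : 0 < sqrt (INR n)) by (apply sqrt_lt_R0; lra).
  assert (Hss : sqrt (sqrt (INR n)) * sqrt (sqrt (INR n)) = sqrt (INR n)) by (apply sqrt_sqrt; lra).
  assert (Hnn : sqrt (INR n) * sqrt (INR n) = INR n) by (apply sqrt_sqrt; lra).
  split; [apply Rmult_le_pos; [apply pow_le, Hl0 | apply Rlt_le, Rinv_0_lt_compat; lra]|].
  (* ln^2 n <= 16 sqrt n, and 16 sqrt n / n = sqrt (256 / n) *)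
  rewrite <- Rdiv_def, sqrt_div_alt by lra.
  replace 256 with (16 * 16) by ring; rewrite sqrt_square by lra.
  apply Rle_trans with (16 * sqrt (INR n) / INR n).
  + unfold Rdiv; apply Rmult_le_compat_r; [apply Rlt_le, Rinv_0_lt_compat; lra|].
    apply Rle_trans with ((4 * sqrt (sqrt (INR n))) * (4 * sqrt (sqrt (INR n)))).
    * simpl; rewrite Rmult_1_r; apply Rmult_le_compat; lra.
    * nra.
  + right; rewrite <- Hnn at 2; field; lra.
Qed.

Lemma edge_prob_growth (k : nat) (q alpha : nat -> R) :
  (exists n0, forall n, (n0 <= n)%nat ->
     q n = (ln (INR n) + INR (k - 1) * ln (ln (INR n)) + alpha n) / INR n) ->
  Un_cv (fun n => alpha n / ln (INR n)) 0 ->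
  exists N, forall n, (N <= n)%nat -> 0 < q n /\ INR n * q n <= (INR k + 2) * ln (INR n).
Proof.
intros [n0 Hq] Ha; destruct (Ha (1/2) ltac:(lra)) as [N1 HN1].
exists (Nat.max 3 (Nat.max n0 N1)); intros n Hn.
specialize (Hq n ltac:(lia)); specialize (HN1 n ltac:(lia)).
assert (Hn3 : 3 <= INR n) by (replace 3 with (INR 3) by (simpl; lra); apply le_INR; lia).
pose proof (ln_INR_ge1 n ltac:(lia)) as HL; set (L := ln (INR n)) in *.
assert (HlnL : 0 <= ln L <= L - 1)
  by (split; [rewrite <- ln_1; apply ln_le_compat | apply ln_le_sub1]; lra).
unfold Rdist in HN1; rewrite Rminus_0_r in HN1; apply Rabs_def2 in HN1.
assert (Halpha : - L / 2 <= alpha n <= L / 2).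
{ replace (alpha n) with ((alpha n / L) * L) by (field; lra); split; nra. }
assert (Hk : 0 <= INR (k - 1) <= INR k) by (split; [apply pos_INR | apply le_INR; lia]).
assert (HnQ : INR n * q n = L + INR (k - 1) * ln L + alpha n) by (rewrite Hq; field; lra).
assert (0 <= INR (k - 1) * ln L <= INR k * L) by (split; nra).
split; [|lra].
apply Rmult_lt_reg_l with (INR n); lra.
Qed.

Lemma Un_cv_of_log_growth (q : nat -> R) c :
  (exists N, forall n, (N <= n)%nat -> 0 < q n /\ INR n * q n <= c * ln (INR n)) ->
  Un_cv q 0 /\ Un_cv (fun n => INR n * q n ^ 2) 0.
Proof.
intros [N HN].
assert (Hb : forall n, (Nat.max N 3 <= n)%nat ->
          0 < q n <= c * (ln (INR n) ^ 2 / INR n) /\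
          0 <= INR n * q n ^ 2 <= c ^ 2 * (ln (INR n) ^ 2 / INR n)).
{ intros n Hn; destruct (HN n ltac:(lia)) as [Hq Hnq].
  assert (Hn3 : 3 <= INR n) by (replace 3 with (INR 3) by (simpl; lra); apply le_INR; lia).
  pose proof (ln_INR_ge1 n ltac:(lia)) as HL; set (L := ln (INR n)) in *.
  replace (INR n * q n ^ 2) with ((INR n * q n) ^ 2 / INR n) by (field; lra).
  replace (c * (L ^ 2 / INR n)) with (c * L * L / INR n) by (field; lra).
  replace (c ^ 2 * (L ^ 2 / INR n)) with ((c * L) ^ 2 / INR n) by (field; lra).
  assert (Hnq0 : 0 < INR n * q n) by (apply Rmult_lt_0_compat; lra).
  assert (Hinv : 0 < / INR n) by (apply Rinv_0_lt_compat; lra).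
  unfold Rdiv; repeat split; try lra.
  - apply Rmult_le_reg_l with (INR n); [lra|].
    replace (INR n * (c * L * L * / INR n)) with (c * L * L) by (field; lra); nra.
  - apply Rmult_le_pos; [apply pow_le|]; lra.
  - apply Rmult_le_compat_r; [lra|]; apply pow_incr; lra. }
split.
- apply Un_cv_squeeze with (lo := fun _ => 0) (up := fun n => c * (ln (INR n) ^ 2 / INR n));
    [apply Un_cv_const | apply Un_cv_scal_0, Un_cv_ln_sqr_div |].
  exists (Nat.max N 3); intros n Hn; destruct (Hb n Hn) as [[Hq Hq'] _]; split; [lra | exact Hq'].
- apply Un_cv_squeeze with (lo := fun _ => 0) (up := fun n => c ^ 2 * (ln (INR n) ^ 2 / INR n));
    [apply Un_cv_const | apply Un_cv_scal_0, Un_cv_ln_sqr_div |].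
  exists (Nat.max N 3); intros n Hn; destruct (Hb n Hn) as [_ Hnq]; exact Hnq.
Qed.

Lemma cv_nbhds_factor m h :
  Un_cv (fun n => INR (count_disjoint_nbhds n m h) * INR (fact h) ^ m / INR n ^ (h * m)) 1.
Proof.
set (K := (m + m * h + h)%nat).
apply Un_cv_squeeze with (lo := fun n => (1 - INR K * / INR n) ^ (h * m)) (up := fun _ => 1).
- apply Un_cv_pow_1, Un_cv_one_minus, Un_cv_inv_INR.
- apply Un_cv_const.
- exists (S K); intros n Hn.
  assert (Hn0 : 0 < INR n) by (apply lt_0_INR; lia).
  assert (HnK : INR (n - K) = INR n - INR K) by (apply minus_INR; lia).
  assert (Hnp : 0 < INR n ^ (h * m)) by (apply pow_lt; lra).
  destruct (count_disjoint_nbhds_bounds n m h) as [lo up]; fold K in lo; rewrite HnK in lo.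
  replace ((1 - INR K * / INR n) ^ (h * m)) with ((INR n - INR K) ^ (h * m) / INR n ^ (h * m))
    by (unfold Rdiv; rewrite <- pow_inv, <- Rpow_mult_distr; f_equal; field; lra).
  assert (divK : forall a, a / INR n ^ (h * m) * INR n ^ (h * m) = a)
    by (intro a; field; apply Rgt_not_eq, Hnp).
  split; apply Rmult_le_reg_r with (INR n ^ (h * m)); try assumption; rewrite !divK; lra.
Qed.

Section EdgeProbFactors.
Variables (X Y : nat -> nat) (m h : nat).
Hypotheses (hXY : forall n, (0 < X n)%nat /\ (X n <= Y n)%nat) (hm : (1 <= m)%nat).
Let q n := q_edge (X n) (Y n).
Hypotheses (q_pos : exists N, forall n, (N <= n)%nat -> 0 < q n) (q_cv : Un_cv q 0).

Lemma q_eventually_small :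
  exists N, forall n, (N <= n)%nat -> 0 < q n /\ INR m * q n <= INR m ^ 2 * q n < 1.
Proof.
assert (Hm1 : 1 <= INR m) by (apply (le_INR 1); lia).
destruct q_pos as [N1 H1].
destruct (Un_cv_eventually_lt q (/ INR m ^ 2) q_cv) as [N2 H2];
  [apply Rinv_0_lt_compat, pow_lt; lra|].
exists (Nat.max N1 N2); intros n Hn; specialize (H1 n ltac:(lia)); specialize (H2 n ltac:(lia)).
assert (Hm2 : 0 < INR m ^ 2) by (apply pow_lt; lra).
repeat split; [lra | apply Rmult_le_compat_r; [lra | simpl; nra] |].
apply Rmult_lt_reg_l with (/ INR m ^ 2); [apply Rinv_0_lt_compat; lra|].
rewrite <- Rmult_assoc, Rinv_l, Rmult_1_l, Rmult_1_r by lra; exact H2.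
Qed.

Lemma cv_rings_factor : Un_cv (fun n => prob_disjoint_rings (X n) (Y n) m) 1.
Proof.
apply Un_cv_squeeze with (lo := fun n => (1 - INR m * q n) ^ m) (up := fun _ => 1).
- apply Un_cv_pow_1, Un_cv_one_minus, q_cv.
- apply Un_cv_const.
- destruct q_eventually_small as [N HN]; exists N; intros n Hn; destruct (HN n Hn) as [Hq Hmq].
  destruct (hXY n) as [HX HXY].
  destruct (prob_disjoint_rings_bounds HXY m) as [lo up]; split; [|exact up].
  apply Rle_trans with (avoid_prob (X n) (Y n) m ^ m); [|exact lo].
  apply pow_incr; pose proof (avoid_prob_lower (X n) (Y n) HX HXY m); fold (q n) in *; lra.
Qed.

(* A late node in N_i must meet S_i; the probability of this, given that it avoids
   the other m - 1 rings, is q up to a factor 1 + O(q). *)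
Lemma cv_meeting_factor :
  Un_cv (fun n => ((avoid_prob (X n) (Y n) (pred m) - avoid_prob (X n) (Y n) m) / q n) ^ (m * h)) 1.
Proof.
apply Un_cv_squeeze with (lo := fun n => (1 - INR m ^ 2 * q n) ^ (m * h)) (up := fun _ => 1).
- apply Un_cv_pow_1, Un_cv_one_minus, q_cv.
- apply Un_cv_const.
- destruct q_eventually_small as [N HN]; exists N; intros n Hn; destruct (HN n Hn) as [Hq Hmq].
  destruct (hXY n) as [HX HXY].
  pose proof (avoid_prob_lower (X n) (Y n) HX HXY (pred m)) as lo.
  pose proof (avoid_prob_upper (X n) (Y n) HX HXY m) as up.
  pose proof (avoid_prob_pred_sub (X n) (Y n) HX HXY m hm) as sub.
  pose proof (pow_one_minus_le (q n) m (q_edge_bounds (X n) (Y n) HXY)) as P.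
  fold (q n) in lo, up, sub, P.
  replace (INR (pred m)) with (INR m - 1) in lo by (destruct m; [lia | rewrite S_INR; simpl; ring]).
  set (v := avoid_prob (X n) (Y n) (pred m) - avoid_prob (X n) (Y n) m) in *.
  assert (Hv : q n - INR m ^ 2 * q n ^ 2 <= v) by (unfold v; lra).
  assert (Hvq : 1 - INR m ^ 2 * q n <= v / q n <= 1).
  { split; apply Rmult_le_reg_r with (q n); try assumption;
      unfold Rdiv; rewrite Rmult_assoc, Rinv_l by lra; simpl in *; nra. }
  split; [apply pow_incr | rewrite <- (pow1 (m * h)); apply pow_incr]; lra.
Qed.

Lemma cv_outside_factor : Un_cv (fun n => INR n * q n ^ 2) 0 ->
  Un_cv (fun n => avoid_prob (X n) (Y n) m ^ (n - m - m * h) * exp (INR m * (INR n * q n))) 1.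
Proof.
intros nq2_cv.
apply Un_cv_squeeze with (lo := fun n => 1 - INR m ^ 2 * (INR n * q n ^ 2))
                         (up := fun n => exp (INR (m + m * h) * (INR m * q n))).
- apply Un_cv_one_minus, nq2_cv.
- apply Un_cv_exp_0, Un_cv_scal_0, Un_cv_scal_0, q_cv.
- destruct q_eventually_small as [N HN]; exists (Nat.max N (m + m * h)); intros n Hn.
  destruct (HN n ltac:(lia)) as [Hq Hmq]; destruct (hXY n) as [HX HXY].
  pose proof (avoid_prob_lower (X n) (Y n) HX HXY m) as lo.
  pose proof (avoid_prob_upper (X n) (Y n) HX HXY m) as up.
  pose proof (avoid_prob_le1 (X n) (Y n) HXY m) as le1.
  pose proof (q_edge_bounds (X n) (Y n) HXY) as q01.
  fold (q n) in lo, up, q01.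
  replace (INR m * (INR n * q n)) with (INR n * (INR m * q n)) by ring.
  replace (INR m ^ 2 * (INR n * q n ^ 2)) with (INR n * (INR m * q n) ^ 2) by ring.
  replace (m + m * h)%nat with (n - (n - m - m * h))%nat by lia.
  split; [apply pow_exp_lower; try lra; lia | apply pow_exp_upper; [split | lia]].
  + apply Rle_trans with (1 - INR m * q n); lra.
  + rewrite Ropp_mult_distr_r, <- exp_pow.
    apply Rle_trans with ((1 - q n) ^ m); [exact up|].
    apply pow_incr; split; [lra|]; pose proof (exp_ineq1_le (- q n)); lra.
Qed.

End EdgeProbFactors.

Lemma prob_a_ratio_eq n X Y m h : (X <= Y)%nat -> (m + m * h <= n)%nat -> (0 < n)%nat ->
  0 < q_edge X Y ->
  prob_a n X Y m h /
    ((/ INR (fact h)) ^ m * (INR n * q_edge X Y) ^ (h * m) * exp (- (INR m * (INR n * q_edge X Y))))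
  = prob_disjoint_rings X Y m
    * (INR (count_disjoint_nbhds n m h) * INR (fact h) ^ m / INR n ^ (h * m))
    * ((avoid_prob X Y (pred m) - avoid_prob X Y m) / q_edge X Y) ^ (m * h)
    * (avoid_prob X Y m ^ (n - m - m * h) * exp (INR m * (INR n * q_edge X Y))).
Proof.
intros HXY Hn Hn0 Hq.
rewrite (prob_a_eq HXY Hn), (Nat.mul_comm h m), exp_Ropp.
unfold Rdiv; rewrite !Rpow_mult_distr, !pow_inv.
assert (INR n ^ (m * h) <> 0) by (apply pow_nonzero, not_0_INR; lia).
assert (q_edge X Y ^ (m * h) <> 0) by (apply pow_nonzero; lra).
assert (INR (fact h) ^ m <> 0) by (apply pow_nonzero, INR_fact_neq_0).
assert (exp (INR m * (INR n * q_edge X Y)) <> 0) by (apply Rgt_not_eq, exp_pos).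
field; repeat split; assumption.
Qed.

Theorem mainTheorem9 (k m h : nat) (X Y : nat -> nat)
  (hk : (1 <= k)%nat) (hm : (1 <= m)%nat)
  (hXY : forall n : nat, (1 <= X n)%nat /\ (X n <= Y n)%nat)
  (hX2 : exists n0 : nat, forall n : nat, (n0 <= n)%nat -> (2 <= X n)%nat)
  (alpha : nat -> R)
  (hq : exists n0 : nat, forall n : nat, (n0 <= n)%nat ->
      q_edge (X n) (Y n) =
      (ln (INR n) + INR (k - 1) * ln (ln (INR n)) + alpha n) / INR n)
  (halpha : Un_cv (fun n : nat => alpha n / ln (INR n)) 0) :
  Un_cv (fun n : nat =>
           prob_a n (X n) (Y n) m h /
           ((/ INR (fact h)) ^ m
            * (INR n * q_edge (X n) (Y n)) ^ (h * m)
            * exp (- (INR m * (INR n * q_edge (X n) (Y n))))))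
        1.
Proof.
set (q n := q_edge (X n) (Y n)).
destruct (edge_prob_growth k q alpha hq halpha) as [N Hgrowth].
destruct (Un_cv_of_log_growth q _ (ex_intro _ N Hgrowth)) as [q_cv nq2_cv].
assert (q_pos : exists N, forall n, (N <= n)%nat -> 0 < q n)
  by (exists N; intros n Hn; apply (Hgrowth n Hn)).
apply Un_cv_eventually_ext with (a := fun n =>
   prob_disjoint_rings (X n) (Y n) m
   * (INR (count_disjoint_nbhds n m h) * INR (fact h) ^ m / INR n ^ (h * m))
   * ((avoid_prob (X n) (Y n) (pred m) - avoid_prob (X n) (Y n) m) / q n) ^ (m * h)
   * (avoid_prob (X n) (Y n) m ^ (n - m - m * h) * exp (INR m * (INR n * q n)))).
- replace 1 with (1 * 1 * 1 * 1) by ring.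
  apply CV_mult; [apply CV_mult; [apply CV_mult|]|].
  + exact (cv_rings_factor X Y m hXY hm q_pos q_cv).
  + apply cv_nbhds_factor.
  + exact (cv_meeting_factor X Y m h hXY hm q_pos q_cv).
  + exact (cv_outside_factor X Y m h hXY hm q_pos q_cv nq2_cv).
- exists (Nat.max N (S (m + m * h))); intros n Hn.
  symmetry; apply prob_a_ratio_eq; [apply hXY | lia | lia | apply (Hgrowth n); lia].
Qed.
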